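(* Let $\mathcal V$ be a finite state space and let $0 = t(0) < \dots$ be discrete diffusion times, with $s(i) < t(i)$ for $i=1,\dots,T$ denoting the pair of consecutive times used in the $i$-th reverse step. Let $p$ (source) and $q$ (target) be two discrete diffusion models on clean data $\mathbf x_0$ and latents $\mathbf z_t \in \mathcal V$ (or sequences thereof) that share the same Markov forward (noising) process, i.e. $p(\mathbf z_t \mid \mathbf x_0) = q(\mathbf z_t \mid \mathbf x_0)$ for all $t$ and the same forward transition kernels, and assume that the density ratio $q(\mathbf x_0)/p(\mathbf x_0)$ is well defined. Let the reverse target-domain model $q_{\psi^\star}(\mathbf z_{s(i)} \mid \mathbf z_{t(i)})$ be defined as a minimizer $$\psi^\star \in \arg\min_{\psi}\ \mathbb E_{q}\Big[\sum_{i=1}^{T} D_{\mathrm{KL}}\big(q(\mathbf z_{s(i)} \mid \mathbf z_{t(i)}, \mathbf x_0)\,\big\|\,q_\psi(\mathbf z_{s(i)} \mid \mathbf z_{t(i)})\big)\Big],$$ where $\mathbf x_0 \sim q$ and $\mathbf z_{t(i)} \sim q(\cdot \mid \mathbf x_0)$. Then $$q_{\psi^\star}(\mathbf z_{s(i)} \mid \mathbf z_{t(i)}) = \frac{p(\mathbf z_{s(i)} \mid \mathbf z_{t(i)})\ \mathbb E_{\mathbf x_0 \sim p(\cdot \mid \mathbf z_{s(i)})}\!\left[\frac{q(\mathbf x_0)}{p(\mathbf x_0)}\right]}{\sum_{\tilde{\mathbf z}_{s(i)}} p(\tilde{\mathbf z}_{s(i)} \mid \mathbf z_{t(i)})\ \mathbb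 E_{\mathbf x_0 \sim p(\cdot \mid \tilde{\mathbf z}_{s(i)})}\!\left[\frac{q(\mathbf x_0)}{p(\mathbf x_0)}\right]}.$$
   Context: $p(\mathbf z_{s}\mid \mathbf z_t)$ denotes the true reverse (backward) conditional of the source diffusion model (the distribution approximated by a source-trained denoiser), $p(\mathbf x_0 \mid \mathbf z_s)$ the source posterior of clean data given the latent at time $s$, and $q(\mathbf z_s \mid \mathbf z_t, \mathbf x_0)$ the true backward posterior of the target forward process. The minimization over $\psi$ is over conditional distributions $q_\psi(\cdot \mid \mathbf z_{t(i)})$ on the latent space (one for each step $i$ and each value of $\mathbf z_{t(i)}$). $D_{\mathrm{KL}}$ is the Kullback–Leibler divergence. *)

From HB Require Import structures.
From mathcomp Require Import all_boot all_order all_algebra.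
From mathcomp Require Import all_classical all_reals all_analysis.
Set Implicit Arguments. Unset Strict Implicit. Unset Printing Implicit Defensive.
Import Order.TTheory GRing.Theory Num.Theory.
Local Open Scope ring_scope.

(* Discrete diffusion on a finite state space V; clean data x0 = z_0 in V.
   Reverse step i (1 <= i <= T) goes from time t(i) (index i) to
   s(i) = t(i-1) (index i-1).  The shared Markov forward process is given by
   transition kernels F i : V -> V -> R (from z_{t(i-1)} to z_{t(i)}). *)

Section DiffDefs.
Variables (R : realType) (V : finType).

Definition is_dist (a : V -> R) : Prop :=
  (forall z, 0 <= a z) /\ \sum_(z : V) a z = 1.

Definition cond_family (T : nat) (psi : nat -> V -> V -> R) : Prop :=
  forall i, (1 <= i <= T)%N -> forall zt, is_dist (psi i zt).

(* forward marginal kernel  p(z_{t(n)} = z | x0 = x) *)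
Fixpoint fwd (F : nat -> V -> V -> R) (n : nat) (x z : V) : R :=
  match n with
  | 0 => (x == z)%:R
  | m.+1 => \sum_(y : V) fwd F m x y * F m.+1 y z
  end.

Definition marg (P : V -> R) F n (z : V) : R := \sum_(x : V) P x * fwd F n x z.

Definition pjoint (P : V -> R) F i (zs zt : V) : R :=
  \sum_(x : V) P x * fwd F i.-1 x zs * F i zs zt.

Definition revcond (P : V -> R) F i (zt zs : V) : R :=
  pjoint P F i zs zt / marg P F i zt.

Definition post (P : V -> R) F j (z x : V) : R :=
  P x * fwd F j x z / marg P F j z.

Definition Epost_ratio (P Q : V -> R) F j (z : V) : R :=
  \sum_(x : V) post P F j z x * (Q x / P x).

(* backward posterior of the forward process q(z_{s(i)} = zs | z_{t(i)} = zt, x0 = x) *)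
Definition fwd_post F i (x zt zs : V) : R :=
  fwd F i.-1 x zs * F i zs zt / fwd F i x zt.

Definition KL (a b : V -> R) : \bar R :=
  (\sum_(z : V) (if a z == 0%R then 0 else
                  if b z == 0%R then +oo else (a z * ln (a z / b z))%:E))%E.

Definition objective (Q : V -> R) F (T : nat) (psi : nat -> V -> V -> R) : \bar R :=
  (\sum_(x : V) \sum_(1 <= i < T.+1) \sum_(zt : V)
      ((Q x * fwd F i x zt)%:E * KL (fwd_post F i x zt) (psi i zt)))%E.

End DiffDefs.

(* The objective splits into one term per reverse step i and latent zt: the
   q(x0, zt)-weighted sum over x0 of KL(q(. | zt, x0) || psi(. | zt)).  Up to a
   constant this is minus the cross entropy of psi(. | zt) against the weighted
   sum of the forward posteriors, which is the joint q(., zt); by Gibbs'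
   inequality the unique minimizer is q(. | zt).  Since p and q share the Markov
   forward kernel, q(zs, zt) = q(zs) F(zs, zt) = p(zs | zt) p(zt) q(zs) / p(zs),
   and q(zs) / p(zs) = E_{x0 ~ p(. | zs)}[q(x0) / p(x0)]; normalizing in zs
   gives the stated formula. *)

From HB Require Import structures.
From mathcomp Require Import all_boot all_order all_algebra.
From mathcomp Require Import all_classical all_reals all_analysis.
From mathcomp Require Import ring lra.
Import Order.TTheory GRing.Theory Num.Theory.
Local Open Scope ring_scope.
Set Implicit Arguments. Unset Strict Implicit.

Section Gibbs.
Variable R : realType.

Lemma ln_le_subr1 (x : R) : 0 < x -> ln x <= x - 1.
Proof.
move=> x_gt0; rewrite -[x in ln x](subrK 1) addrC; apply: le_ln1Dx; lra.
Qed.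

Lemma ln_lt_subr1 (x : R) : 0 < x -> x != 1 -> ln x < x - 1.
Proof.
move=> x_gt0 x_neq1; rewrite ltrBrDl -{2}(lnK x_gt0) expR_gt1Dx //.
by rewrite ln_eq0.
Qed.

Lemma xlny_sub_xlnx_le (a b : R) : 0 <= a -> 0 <= b -> (a != 0 -> b != 0) ->
  a * ln b - a * ln a <= b - a.
Proof.
move=> a_ge0 b_ge0 ab; have [->|a_neq0] := eqVneq a 0; first by rewrite !mul0r !subr0.
have a_gt0 : 0 < a by rewrite lt_def a_neq0.
have b_gt0 : 0 < b by rewrite lt_def ab.
rewrite -mulrBr -ln_div ?posrE //.
have := ler_wpM2l (ltW a_gt0) (ln_le_subr1 (divr_gt0 b_gt0 a_gt0)).
by rewrite mulrBr mulr1 mulrCA divff // mulr1.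
Qed.

Lemma xlny_sub_xlnx_lt (a b : R) : 0 <= a -> 0 <= b -> (a != 0 -> b != 0) -> b != a ->
  a * ln b - a * ln a < b - a.
Proof.
move=> a_ge0 b_ge0 ab b_neq_a; have [a0|a_neq0] := eqVneq a 0.
  by rewrite a0 !mul0r !subr0 lt_def b_ge0 andbT -a0.
have a_gt0 : 0 < a by rewrite lt_def a_neq0.
have b_gt0 : 0 < b by rewrite lt_def ab.
have ba_neq1 : b / a != 1 by apply: contra_neq b_neq_a => /divr1_eq.
rewrite -mulrBr -ln_div ?posrE //.
have := ln_lt_subr1 (divr_gt0 b_gt0 a_gt0) ba_neq1.
by rewrite -(ltr_pM2l a_gt0) mulrBr mulr1 mulrCA divff // mulr1.
Qed.

Variable V : finType.

Lemma cross_entropy_le_eq (q p : V -> R) : is_dist q -> is_dist p ->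
  (forall z, q z != 0 -> p z != 0) ->
  \sum_z q z * ln (q z) <= \sum_z q z * ln (p z) -> p = q.
Proof.
move=> [q_ge0 q1] [p_ge0 p1] qp le_qp.
pose gap z := (p z - q z) - (q z * ln (p z) - q z * ln (q z)).
have gap_ge0 z : 0 <= gap z by rewrite subr_ge0 xlny_sub_xlnx_le //; apply: qp.
have gap_sum0 : \sum_z gap z = 0.
  apply/eqP; rewrite eq_le sumr_ge0 ?andbT // !sumrB p1 q1 subrr sub0r oppr_le0.
  by rewrite subr_ge0.
apply/funext => z; apply/eqP/negPn/negP => pq.
have /eqP := psumr_eq0P (fun z _ => gap_ge0 z) gap_sum0 (i := z) isT.
by rewrite subr_eq0 eq_sym lt_eqF // xlny_sub_xlnx_lt //; apply: qp.
Qed.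

End Gibbs.

Section KullbackLeibler.
Variables (R : realType) (V : finType).
Local Open Scope ereal_scope.

Lemma KL_neqNy (a b : V -> R) : KL a b != -oo.
Proof.
apply/eqP => /esum_eqNyP [z [_ _]].
by case: ifP => _ //; case: ifP.
Qed.

Lemma KL_finE (a b : V -> R) : (forall z, a z != 0%R -> b z != 0%R) ->
  KL a b = (\sum_z a z * ln (a z / b z))%:E.
Proof.
move=> ab; rewrite /KL -sumEFin; apply: eq_bigr => z _.
have [->|az] := eqVneq (a z) 0%R; first by rewrite mul0r.
by rewrite (negbTE (ab z az)).
Qed.

Lemma KL_lty_supp (a b : V -> R) z : KL a b < +oo -> a z != 0%R -> b z != 0%R.
Proof.
move=> + az; apply: contraTneq => bz; rewrite ltey negbK.
apply/eqP/esum_eqyP => [y _|]; first by case: ifP => _ //; case: ifP.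
by exists z; rewrite mem_index_enum (negbTE az) bz eqxx.
Qed.

Variable X : finType.

Definition weighted_KL (w : X -> R) (a : X -> V -> R) (b : V -> R) : \bar R :=
  \sum_x (w x)%:E * KL (a x) b.

Variables (w : X -> R) (a : X -> V -> R).
Hypotheses (w_ge0 : forall x, (0 <= w x)%R) (a_ge0 : forall x z, (0 <= a x z)%R).

Lemma weighted_KL_neqNy b : weighted_KL w a b != -oo.
Proof.
apply/eqP => /esum_eqNyP [x [_ _]]; have := KL_neqNy (a x) b.
case: (KL (a x) b) => [r||] // _; have [->|wx] := eqVneq (w x) 0%R.
  by rewrite mul0e.
by rewrite gt0_muley // lte_fin lt_def wx w_ge0.
Qed.

Lemma weighted_KL_lty_supp b x z : weighted_KL w a b < +oo ->
  (w x * a x z != 0)%R -> b z != 0%R.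
Proof.
move=> wKL_lty; rewrite mulf_eq0 negb_or => /andP [wx az].
apply: (KL_lty_supp _ az); move: wKL_lty; rewrite !ltey; apply: contra => /eqP KLy.
apply/eqP/esum_eqyP => [y _|]; last first.
  by exists x; rewrite mem_index_enum KLy gt0_muley // lte_fin lt_def wx w_ge0.
apply: contra_neq (weighted_KL_neqNy b) => wKLy.
by apply/esum_eqNyP; exists y.
Qed.

Lemma weighted_KL_lty (b : V -> R) : (forall x z, w x * a x z != 0 -> b z != 0)%R ->
  weighted_KL w a b < +oo.
Proof.
move=> wab; apply: lte_sum_pinfty => x _; have [->|wx] := eqVneq (w x) 0%R.
  by rewrite mul0e ltry.
by rewrite KL_finE -?EFinM ?ltry // => z az; apply: (wab x); rewrite mulf_neq0.
Qed.

Lemma weighted_KL_finE (b : V -> R) : (forall z, 0 <= b z)%R ->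
  (forall x z, w x * a x z != 0 -> b z != 0)%R ->
  weighted_KL w a b = (\sum_x \sum_z w x * a x z * ln (a x z)
                       - \sum_z (\sum_x w x * a x z) * ln (b z))%:E.
Proof.
move=> b_ge0 wab.
have termE x : (w x)%:E * KL (a x) b =
    (\sum_z (w x * a x z * ln (a x z) - w x * a x z * ln (b z)))%:E.
  have [->|wx] := eqVneq (w x) 0%R.
    by rewrite mul0e big1 // => z _; rewrite !mul0r subrr.
  rewrite KL_finE => [|z az]; last by apply: (wab x); rewrite mulf_neq0.
  rewrite -EFinM mulr_sumr; congr EFin; apply: eq_bigr => z _.
  have [->|az] := eqVneq (a x z) 0%R; first by rewrite !(mulr0, mul0r) subrr.
  have b_gt0 : (0 < b z)%R by rewrite lt_def b_ge0 andbT (wab x) // mulf_neq0.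
  have a_gt0 : (0 < a x z)%R by rewrite lt_def az a_ge0.
  rewrite ln_div ?posrE //; ring.
rewrite /weighted_KL (eq_bigr _ (fun x _ => termE x)) sumEFin; congr EFin.
under eq_bigr do rewrite sumrB.
rewrite sumrB; congr (_ - _)%R; rewrite exchange_big; apply: eq_bigr => z _.
by rewrite mulr_suml.
Qed.

Lemma weighted_KL_argmin_uniq (q b : V -> R) (M : R) : (0 < M)%R -> is_dist q ->
  (forall z, \sum_x w x * a x z = M * q z)%R -> is_dist b ->
  weighted_KL w a b <= weighted_KL w a q -> b = q.
Proof.
move=> M_gt0 q_dist mixE b_dist le_bq.
have [q_ge0 _] := q_dist; have [b_ge0 _] := b_dist.
have supp_q x z : (w x * a x z != 0 -> q z != 0)%R.
  move=> waz; apply: contra_neq waz => qz.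
  have wa_ge0 y : true -> (0 <= w y * a y z)%R by rewrite mulr_ge0.
  by apply: (psumr_eq0P wa_ge0) => //; rewrite mixE qz mulr0.
have Wq := weighted_KL_finE q_ge0 supp_q.
have /weighted_KL_lty_supp supp_b : weighted_KL w a b < +oo.
  by apply: le_lt_trans le_bq _; rewrite Wq ltry.
move: le_bq; rewrite Wq (weighted_KL_finE b_ge0 supp_b) lee_fin lerD2l lerN2.
under eq_bigr do rewrite mixE -mulrA.
under [X in (_ <= X)%R]eq_bigr do rewrite mixE -mulrA.
rewrite -!mulr_sumr ler_pM2l // => le_qb.
apply: cross_entropy_le_eq => // z /negPf qz.
have /eqP : (\sum_x w x * a x z != 0)%R by rewrite mixE mulf_eq0 qz gt_eqF.
by case/psumr_neq0P => [y _|y /andP [_ /lt0r_neq0]]; [rewrite mulr_ge0 | exact: supp_b].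
Qed.

End KullbackLeibler.

Section SeparableMinimization.
Variables (R : realType) (I : eqType) (A : Type).
Local Open Scope ereal_scope.

(* Finiteness of the minimum lets the terms common to both sums cancel. *)
Lemma separable_argmin (r : seq I) (S : I -> A -> Prop) (g : I -> A -> \bar R)
    (phi : I -> A) k c :
  uniq r -> k \in r -> (forall i c, i \in r -> g i c != -oo) ->
  (forall i, S i (phi i)) -> S k c ->
  (forall phi', (forall i, S i (phi' i)) ->
     \sum_(i <- r) g i (phi i) <= \sum_(i <- r) g i (phi' i)) ->
  \sum_(i <- r) g i (phi i) < +oo ->
  g k (phi k) <= g k c.
Proof.
move=> r_uniq kr gNy Sphi Sc phi_min sum_lty.
pose phi' i := if i == k then c else phi i.
have /phi_min : forall i, S i (phi' i) by move=> i; rewrite /phi'; case: eqP => [->|].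
rewrite !(bigD1_seq k) //= /phi' eqxx.
rewrite [X in _ <= _ + X](eq_bigr (fun i => g i (phi i))) => [|i /negPf -> //].
have /sum_fin_numP fin : \sum_(i <- r) g i (phi i) \is a fin_num.
  rewrite fin_real // sum_lty andbT ltNye.
  by apply/eqP => /esum_eqNyP [i [ir _ /eqP]]; apply/negP/gNy.
by rewrite leeD2rE //; apply/sum_fin_numP => i ir _; exact: fin.
Qed.

End SeparableMinimization.

Section ForwardProcess.
Variables (R : realType) (V : finType) (F : nat -> V -> V -> R).

Lemma pjointE (P : V -> R) i zs zt : pjoint P F i zs zt = marg P F i.-1 zs * F i zs zt.
Proof. by rewrite /pjoint /marg mulr_suml. Qed.

Lemma marg_pjoint (P : V -> R) i zt : (0 < i)%N ->
  marg P F i zt = \sum_zs pjoint P F i zs zt.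
Proof.
case: i => // i _; rewrite /marg /pjoint exchange_big; apply: eq_bigr => x _ /=.
by rewrite mulr_sumr; apply: eq_bigr => y _; rewrite mulrA.
Qed.

(* Also when [marg P F j z = 0]: both sides are then 0 since [x / 0 = 0]. *)
Lemma Epost_ratioE (P Q : V -> R) j z : (forall x, P x = 0 -> Q x = 0) ->
  Epost_ratio P Q F j z = marg Q F j z / marg P F j z.
Proof.
move=> PQ; rewrite /Epost_ratio /marg mulr_suml; apply: eq_bigr => x _.
rewrite /post -/(marg P F j z).
have [Px0|Px] := eqVneq (P x) 0; first by rewrite Px0 PQ // !mul0r.
rewrite [LHS](_ : _ = P x / P x * (Q x * fwd F j x z / marg P F j z)); last by ring.
by rewrite divff // mul1r.
Qed.

Variable T : nat.
Hypothesis F_kernel : cond_family T F.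

Lemma kernel_ge0 j y z : (1 <= j <= T)%N -> 0 <= F j y z.
Proof. by move=> jT; case: (F_kernel jT y). Qed.

Lemma fwd_ge0 n x z : (n <= T)%N -> 0 <= fwd F n x z.
Proof.
elim: n z => [|n IHn] z nT /=; first exact: ler0n.
apply: sumr_ge0 => y _; rewrite mulr_ge0 ?kernel_ge0 //.
by rewrite IHn // ltnW.
Qed.

Lemma fwd_post_ge0 j x zt zs : (1 <= j <= T)%N -> 0 <= fwd_post F j x zt zs.
Proof.
case: j => // j jT; have jT' : (j <= T)%N by exact: ltnW.
by rewrite divr_ge0 ?mulr_ge0 ?fwd_ge0 ?kernel_ge0.
Qed.

Lemma fwd_mul_fwd_post j x zt zs : (1 <= j <= T)%N ->
  fwd F j x zt * fwd_post F j x zt zs = fwd F j.-1 x zs * F j zs zt.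
Proof.
case: j => // j jT; rewrite /fwd_post mulrCA.
have [fwd0|fwd_neq0] := eqVneq (fwd F j.+1 x zt) 0; last by rewrite divff ?mulr1.
have term_ge0 y : true -> 0 <= fwd F j x y * F j.+1 y zt.
  by rewrite mulr_ge0 ?fwd_ge0 ?kernel_ge0 // ltnW.
by rewrite fwd0 mul0r mulr0 (psumr_eq0P term_ge0 fwd0).
Qed.

Section Marginals.
Variable P : V -> R.
Hypothesis P_ge0 : forall x, 0 <= P x.

Lemma marg_ge0 n z : (n <= T)%N -> 0 <= marg P F n z.
Proof. by move=> nT; apply: sumr_ge0 => x _; rewrite mulr_ge0 ?fwd_ge0. Qed.

Lemma pjoint_ge0 i zs zt : (1 <= i <= T)%N -> 0 <= pjoint P F i zs zt.
Proof.
by case: i => // i iT; rewrite pjointE mulr_ge0 ?marg_ge0 ?kernel_ge0 // ltnW.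
Qed.

Lemma revcond_dist i zt : (1 <= i <= T)%N -> marg P F i zt != 0 ->
  is_dist (revcond P F i zt).
Proof.
move=> iT margP; split => [zs|].
  by rewrite divr_ge0 ?pjoint_ge0 ?marg_ge0 //; case/andP: iT.
by rewrite -mulr_suml -marg_pjoint ?divff //; case/andP: iT.
Qed.

End Marginals.

Section Target.
Variable Q : V -> R.
Hypothesis Q_ge0 : forall x, 0 <= Q x.

Definition step_objective i zt (b : V -> R) :=
  weighted_KL (fun x => Q x * fwd F i x zt) (fun x => fwd_post F i x zt) b.

(* Where the target marginal vanishes, [revcond Q F i zt] is the junk value 0
   (not a distribution) and any [psi i zt] does. *)
Definition revcond_completion (psi : nat -> V -> V -> R) i zt :=
  if marg Q F i zt == 0 then psi i zt else revcond Q F i zt.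

Lemma objectiveE psi : objective Q F T psi =
  (\sum_(1 <= i < T.+1) \sum_zt step_objective i zt (psi i zt))%E.
Proof.
by rewrite /objective exchange_big; apply: eq_bigr => i _; rewrite exchange_big.
Qed.

Lemma pjoint_mixture i zt zs : (1 <= i <= T)%N ->
  pjoint Q F i zs zt = \sum_x Q x * fwd F i x zt * fwd_post F i x zt zs.
Proof.
by move=> iT; apply: eq_bigr => x _; rewrite -[RHS]mulrA fwd_mul_fwd_post // mulrA.
Qed.

Lemma pjoint_neq0 i zt zs x : (1 <= i <= T)%N ->
  Q x * fwd F i x zt * fwd_post F i x zt zs != 0 -> pjoint Q F i zs zt != 0.
Proof.
move=> iT; have term_ge0 y : true -> 0 <= Q y * fwd F i y zt * fwd_post F i y zt zs.
  by rewrite mulr_ge0 ?fwd_post_ge0 // mulr_ge0 ?fwd_ge0 //; case/andP: iT.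
by apply: contra_neq; rewrite pjoint_mixture // => /(psumr_eq0P term_ge0) ->.
Qed.

Lemma revcond_completion_lty psi i zt : (1 <= i <= T)%N ->
  (step_objective i zt (revcond_completion psi i zt) < +oo)%E.
Proof.
move=> iT; apply: weighted_KL_lty => x zs /(pjoint_neq0 iT) pjoint_neq0.
have margQ : marg Q F i zt != 0.
  have pjoint_ge0' y : true -> 0 <= pjoint Q F i y zt by rewrite pjoint_ge0.
  apply: contra_neq pjoint_neq0; rewrite marg_pjoint; last by case/andP: iT.
  by move/(psumr_eq0P pjoint_ge0') ->.
by rewrite /revcond_completion (negbTE margQ) mulf_neq0 ?invr_eq0.
Qed.

Lemma cond_family_revcond_completion psi : cond_family T psi ->
  cond_family T (revcond_completion psi).
Proof.
move=> psi_fam i iT zt; rewrite /revcond_completion.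
by case: eqP => [_|/eqP margQ]; [exact: psi_fam | exact: (revcond_dist Q_ge0)].
Qed.

Lemma objective_revcond_completion_lty psi :
  (objective Q F T (revcond_completion psi) < +oo)%E.
Proof.
rewrite objectiveE big_nat_cond; apply: lte_sum_pinfty => i /andP [iT _].
by apply: lte_sum_pinfty => zt _; exact: revcond_completion_lty.
Qed.

Lemma objective_argmin_step psistar i zt b : cond_family T psistar ->
  (forall psi, cond_family T psi ->
     (objective Q F T psistar <= objective Q F T psi)%E) ->
  (1 <= i <= T)%N -> is_dist b ->
  (step_objective i zt (psistar i zt) <= step_objective i zt b)%E.
Proof.
move=> psistar_fam psistar_min iT b_dist.
pose r := [seq (j, z) | j <- index_iota 1 T.+1, z <- index_enum V].
have objective_sumE psi : objective Q F T psi =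
    (\sum_(k <- r) step_objective k.1 k.2 (psi k.1 k.2))%E.
  by rewrite objectiveE big_allpairs.
apply: (@separable_argmin _ _ _ r (fun k c => (1 <= k.1 <= T)%N -> is_dist c)
  (fun k => step_objective k.1 k.2) (fun k => psistar k.1 k.2) (i, zt)).
- by rewrite allpairs_uniq ?iota_uniq ?index_enum_uniq // => -[? ?] [? ?].
- by rewrite allpairs_f ?mem_index_iota ?mem_index_enum.
- move=> _ c /allpairsP [[j z] [jr _ ->]] /=; rewrite mem_index_iota ltnS in jr.
  by apply: weighted_KL_neqNy => x; rewrite mulr_ge0 ?fwd_ge0 //; case/andP: jr.
- by move=> [j z] /= jT; exact: psistar_fam.
- by [].
- move=> phi' phi'_fam; rewrite -objective_sumE.
  rewrite [X in (_ <= X)%E]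
    (eq_bigr (fun k => step_objective k.1 k.2 (phi' (k.1, k.2)))).
    rewrite -(objective_sumE (fun j z => phi' (j, z))).
    by apply: psistar_min => j jT z; exact: phi'_fam.
  by move=> [] //.
- rewrite -objective_sumE.
  apply: le_lt_trans (objective_revcond_completion_lty psistar).
  by apply: psistar_min; exact: cond_family_revcond_completion.
Qed.

End Target.

Section Reweighting.
Variables P Q : V -> R.
Hypotheses (P_ge0 : forall x, 0 <= P x) (P_dominates : forall x, P x = 0 -> Q x = 0).

Lemma marg_abscont n z : (n <= T)%N -> marg P F n z = 0 -> marg Q F n z = 0.
Proof.
move=> nT margP0; have term_ge0 x : true -> 0 <= P x * fwd F n x z.
  by rewrite mulr_ge0 ?fwd_ge0.
rewrite /marg big1 // => x _; have /eqP := psumr_eq0P term_ge0 margP0 (i := x) isT.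
by rewrite mulf_eq0 => /orP [/eqP/P_dominates -> | /eqP ->]; rewrite ?mul0r ?mulr0.
Qed.

Lemma revcond_mul_Epost_ratio i zt zs : (1 <= i <= T)%N ->
  revcond P F i zt zs * Epost_ratio P Q F i.-1 zs = pjoint Q F i zs zt / marg P F i zt.
Proof.
case: i => // i iT; rewrite Epost_ratioE // /revcond !pjointE /=.
have [margP0|margP] := eqVneq (marg P F i zs) 0.
  by rewrite margP0 marg_abscont ?mul0r // ltnW.
rewrite [LHS](_ : _ = marg P F i zs / marg P F i zs *
                     (marg Q F i zs * F i.+1 zs zt / marg P F i.+1 zt)); last by ring.
by rewrite divff // mul1r.
Qed.

Lemma reweighted_revcondE i zt zs : (1 <= i <= T)%N -> marg Q F i zt != 0 ->
  revcond P F i zt zs * Epost_ratio P Q F i.-1 zs /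
  \sum_zs' revcond P F i zt zs' * Epost_ratio P Q F i.-1 zs' = revcond Q F i zt zs.
Proof.
move=> iT margQ; have margP : marg P F i zt != 0.
  by apply: contra_neq margQ; apply: marg_abscont; case/andP: iT.
under eq_bigr do rewrite revcond_mul_Epost_ratio //.
rewrite revcond_mul_Epost_ratio // -mulr_suml -marg_pjoint; last by case/andP: iT.
by rewrite invf_div mulrA divfK.
Qed.

End Reweighting.

End ForwardProcess.

Theorem theorem1 (R : realType) (V : finType) (T : nat)
    (F : nat -> V -> V -> R) (P Q : V -> R) (psistar : nat -> V -> V -> R) :
  is_dist P -> is_dist Q ->
  cond_family T F ->
  (forall x, P x = 0 -> Q x = 0) ->
  cond_family T psistar ->
  (forall psi, cond_family T psi ->
     (objective Q F T psistar <= objective Q F T psi)%E) ->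
  forall i, (1 <= i <= T)%N ->
  forall zt, 0 < marg Q F i zt ->
  forall zs,
    psistar i zt zs =
      revcond P F i zt zs * Epost_ratio P Q F i.-1 zs /
      \sum_(zs' : V) revcond P F i zt zs' * Epost_ratio P Q F i.-1 zs'.
Proof.
move=> [P_ge0 _] [Q_ge0 _] F_kernel P_dominates psistar_fam psistar_min i iT zt
  margQ_gt0 zs.
have margQ := lt0r_neq0 margQ_gt0.
rewrite (reweighted_revcondE F_kernel P_ge0 P_dominates _ iT margQ).
suff -> : psistar i zt = revcond Q F i zt by [].
have revcondQ_dist := revcond_dist F_kernel Q_ge0 iT margQ.
apply: (weighted_KL_argmin_uniq (w := fun x => Q x * fwd F i x zt)
  (a := fun x => fwd_post F i x zt) _ _ margQ_gt0 revcondQ_dist).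
- by move=> x; rewrite mulr_ge0 ?Q_ge0 ?(fwd_ge0 F_kernel) //; case/andP: iT.
- by move=> x z; exact: (fwd_post_ge0 F_kernel).
- by move=> zs'; rewrite -(pjoint_mixture F_kernel) // mulrC divfK.
- exact: psistar_fam.
- exact: (objective_argmin_step F_kernel Q_ge0).
Qed.
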